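(* Let $\lambda$ be a positive integer with $\gcd(\lambda,n)=1$ and let $1\le j\le n-1$. Then $A/R_jA\cong A/R_{\lambda j}A$ as graded $\Bbbk$-vector spaces; equivalently $\bar e_jE\cong\bar e_{\lambda j}E$ as graded vector spaces. In particular, if $n$ is prime then $\bar e_1E\cong\bar e_jE$ for all $j=2,\dots,n-1$.
   Context: $\Bbbk$ is an algebraically closed field of characteristic zero, $n\ge2$, $A=\Bbbk_{-1}[x_0,\dots,x_{n-1}]$ is generated by degree-one $x_0,\dots,x_{n-1}$ with $x_ix_j=-x_jx_i$ ($i\ne j$), $C_n=\langle\sigma\rangle$ acts by $\sigma(x_i)=x_{i+1}$ (indices in $\mathbb{Z}_n$). Let $\omega$ be a primitive $n$th root of unity and $R_j=\{a\in A\mid\sigma(a)=\omega^{-j}a\}$ for $j\in\mathbb{Z}_n$; $R_jA$ is the right ideal generated by $R_j$. $E=(A\#C_n)/(e_0)$ where $e_0=\frac1n\sum_{g\in C_n}g$, $e_\alpha=\frac1n\sum_{i=0}^{n-1}(\omega^\alpha\sigma)^i$, and $\bar e_j$ is the image of $e_j$ in $E$. *)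

From HB Require Import structures.
From mathcomp Require Import all_boot all_order all_algebra.
Set Implicit Arguments. Unset Strict Implicit. Unset Printing Implicit Defensive.
Import Order.TTheory GRing.Theory Num.Theory.
Local Open Scope ring_scope.

(* The skew polynomial ring A = k_{-1}[x_0,...,x_{n-1}], degree by degree.
   A monomial of degree d is x^a = x_0^{a_0} x_1^{a_1} ... x_{n-1}^{a_{n-1}}
   (ordered product), with a an exponent vector of total degree d; these
   monomials form a basis of the homogeneous component A_d. *)
Definition mono (n d : nat) :=
  {a : {ffun 'I_n -> 'I_d.+1} | (\sum_(i < n) (a i : nat) == d)%N}.

Definition expo n d (m : mono n d) (i : 'I_n) : nat := val (val m i).

Section SkewPoly.
Variables (K : fieldType) (n : nat).

(* A_d : coordinates in the monomial basis. *)
Definition Adeg (d : nat) := {ffun mono n d -> K^o}.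

(* the basis vector x^c of A_d, for c : 'I_n -> nat (it is 0 if c does not
   have total degree d, since then no monomial of degree d has exponent c) *)
Definition X d (c : 'I_n -> nat) : Adeg d :=
  [ffun m : mono n d => ([forall i, expo m i == c i])%:R].

(* x^a x^b = (-1)^{sum_{i > k} a_i b_k} x^{a+b}, from x_i x_k = - x_k x_i *)
Definition msign e f (a : mono n e) (b : mono n f) : K :=
  (-1) ^+ (\sum_(i < n) \sum_(k < n | (k < i)%N) expo a i * expo b k)%N.

(* product A_e x A_f -> A_d (meaningful for d = e + f) *)
Definition mulA e f d (p : Adeg e) (q : Adeg f) : Adeg d :=
  \sum_(a : mono n e) \sum_(b : mono n f)
     (p a * q b * msign a b) *: X d (fun i => expo a i + expo b i).

(* A graded algebra automorphism permuting the variables, x_i |-> x_{pi i}: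
   pi(x^a) = x_{pi 0}^{a_0} ... x_{pi (n-1)}^{a_{n-1}}; reordering the blocks
   into normal form gives the sign (-1)^{sum over inversions i<k, pi i > pi k
   of a_i a_k}, and the exponent vector b with b_{pi i} = a_i. *)
Definition perm_sign (pi : 'I_n -> 'I_n) d (a : mono n d) : K :=
  (-1) ^+ (\sum_(i < n) \sum_(k < n | (i < k)%N && (pi k < pi i)%N)
             expo a i * expo a k)%N.

Definition permA_fun (pi : 'I_n -> 'I_n) (pinv : 'I_n -> 'I_n) d
  (p : Adeg d) : Adeg d :=
  \sum_(a : mono n d) (p a * perm_sign pi a) *: X d (fun i => expo a (pinv i)).

End SkewPoly.

(* the generator sigma of C_n: x_i |-> x_{i+1} (indices mod n) *)
Definition succ_mod n (i : 'I_n) : 'I_n := ordS i.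
Definition pred_mod n (i : 'I_n) : 'I_n := ord_pred i.

Definition sigmaA (K : fieldType) n d : 'End(Adeg K n d) :=
  linfun (permA_fun (@succ_mod n) (@pred_mod n) (d := d)).

Definition Rdeg (K : fieldType) n (w : K) (j e : nat) : {vspace Adeg K n e} :=
  lker (sigmaA K n e - (w ^- j) *: \1)%VF.

(* degree d component of the right ideal R_j A:
   sum over e <= d of the span of the products r * x^b, with r running over
   a basis of (R_j)_e and x^b over the monomials of degree d - e. *)
Definition RAdeg (K : fieldType) n (w : K) (j d : nat) : {vspace Adeg K n d} :=
  (\sum_(e < d.+1)
     <<[seq mulA d r (X K (d - e) (expo b))
        | r <- (vbasis (Rdeg n w j e) : seq _), b <- enum [set: mono n (d - e)]]>>)%VS.

Definition qdim (K : fieldType) n (w : K) (j d : nat) : nat :=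
  (\dim (fullv : {vspace Adeg K n d}) - \dim (RAdeg n w j d))%N.

(* Let u u' = 1 mod n.  The permutation of the variables
   tau_u : x_i |-> x_{u i} extends to a graded algebra automorphism of
   A = k_{-1}[x_0, ..., x_{n-1}] (the anticommutation signs are compatible),
   and sigma tau_u = tau_u sigma^{u'} since u (i + u') = u i + 1 mod n.  Hence
   tau_u maps the omega^{-j}-eigenspace R_j of sigma into R_{j u'}, so it maps
   the right ideal R_j A into R_{j u'} A degree by degree; being injective it
   gives dim (R_j A)_d <= dim (R_{j u'} A)_d.  Using this for u' = lam and then
   for u' = lam^{-1}, and the fact that R_j only depends on j mod n, we get
   equality, i.e. qdim j d = qdim (lam j) d.  For n prime every 1 <= j' < n
   is a unit, which gives the second claim. *)

From Pilot Require Import Defs.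
From HB Require Import structures.
From mathcomp Require Import all_boot all_order all_algebra zify ring.
(* [ring] loads fraction.v, whose [FracField.mulA] shadows the product of A. *)
Import Defs.
Set Implicit Arguments. Unset Strict Implicit. Unset Printing Implicit Defensive.
Import Order.TTheory GRing.Theory Num.Theory.

Section InversionParity.
Variable n : nat.
Implicit Types (x y a b : 'I_n -> 'I_n -> nat) (c : 'I_n -> nat).

(* The pairing sum_{i,k} x_ik a_ik of a weight x with an indicator a; the
   exponents of the signs in A are such pairings with x = c (x) c'. *)
Definition dotm x a := (\sum_(i < n) \sum_(k < n) x i k * a i k)%N.

Definition outer c c' (i k : 'I_n) := (c i * c' k)%N.

Lemma eq_dotm x y a b : x =2 y -> a =2 b -> dotm x a = dotm y b.
Proof.
by move=> Exy Eab; apply: eq_bigr => i _; apply: eq_bigr => k _; rewrite Exy Eab.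
Qed.

Lemma dotm_odd x a b :
  (forall i k, odd (a i k) = odd (b i k)) -> odd (dotm x a) = odd (dotm x b).
Proof.
have odd_sum := big_morph odd oddD (erefl (odd 0)).
move=> Eab; rewrite !odd_sum; apply: eq_bigr => i _; rewrite !odd_sum.
by apply: eq_bigr => k _; rewrite !oddM Eab.
Qed.

Lemma dotmDl x y a :
  dotm (fun i k => x i k + y i k)%N a = (dotm x a + dotm y a)%N.
Proof.
rewrite /dotm -big_split; apply: eq_bigr => i _ /=; rewrite -big_split.
by apply: eq_bigr => k _; rewrite mulnDl.
Qed.

Lemma dotmDr x a b :
  dotm x (fun i k => a i k + b i k)%N = (dotm x a + dotm x b)%N.
Proof.
rewrite /dotm -big_split; apply: eq_bigr => i _ /=; rewrite -big_split.
by apply: eq_bigr => k _; rewrite mulnDr.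
Qed.

Lemma dotm_tr x a : dotm (fun i k => x k i) (fun i k => a k i) = dotm x a.
Proof. exact: exchange_big. Qed.

Lemma dotm_relabel x a (h : 'I_n -> 'I_n) : injective h ->
  dotm (fun i k => x (h i) (h k)) (fun i k => a (h i) (h k)) = dotm x a.
Proof.
move=> h_inj; rewrite /dotm.
rewrite (reindex_inj h_inj (P := xpredT) (F := fun i => \sum_(k < n) x i k * a i k)%N).
apply: eq_bigr => i _.
by rewrite (reindex_inj h_inj (P := xpredT) (F := fun k => x (h i) k * a (h i) k)%N).
Qed.

Lemma dotm_upper x a : (forall i k, x i k = x k i) -> (forall i, a i i = 0)%N ->
  dotm x a = dotm x (fun i k => (i < k)%N * (a i k + a k i))%N.
Proof.
move=> x_sym a_diag.
transitivity (dotm x (fun i k => (i < k)%N * a i k + (k < i)%N * a i k)%N).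
  apply: eq_dotm => // i k.
  by case: ltngtP => [||/val_inj->]; rewrite ?a_diag /= ?mul1n ?mul0n ?addn0.
have lower : dotm x (fun i k => (k < i)%N * a i k)%N =
             dotm x (fun i k => (i < k)%N * a k i)%N.
  by rewrite -dotm_tr; apply: eq_dotm.
by rewrite dotmDr lower -dotmDr; apply: eq_dotm => // i k; rewrite mulnDr.
Qed.

Definition inversion (f : 'I_n -> 'I_n) (i k : 'I_n) : nat :=
  (i < k)%N && (f k < f i)%N.

Definition inv_weight (f : 'I_n -> 'I_n) c :=
  (\sum_(i < n) \sum_(k < n | (i < k)%N && (f k < f i)%N) c i * c k)%N.

Definition cross_weight c c' :=
  (\sum_(i < n) \sum_(k < n | (k < i)%N) c i * c' k)%N.

Lemma eq_inv_weight f c c' : c =1 c' -> inv_weight f c = inv_weight f c'.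
Proof. by move=> E; apply: eq_bigr => i _; apply: eq_bigr => k _; rewrite !E. Qed.

Lemma eq_inv_weight_perm f f' c : f =1 f' -> inv_weight f c = inv_weight f' c.
Proof. by move=> E; apply: eq_bigr => i _; apply: eq_bigl => k; rewrite !E. Qed.

Lemma eq_cross_weight c1 c2 c1' c2' :
  c1 =1 c1' -> c2 =1 c2' -> cross_weight c1 c2 = cross_weight c1' c2'.
Proof. by move=> E1 E2; apply: eq_bigr => i _; apply: eq_bigr => k _; rewrite E1 E2. Qed.

Lemma sum_pred (P : pred 'I_n) (F : 'I_n -> nat) :
  (\sum_(k < n | P k) F k = \sum_(k < n) F k * P k)%N.
Proof.
by rewrite big_mkcond; apply: eq_bigr => k _; case: (P k); rewrite ?muln1 ?muln0.
Qed.

Lemma inv_weight_dotm f c : inv_weight f c = dotm (outer c c) (inversion f).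
Proof. by apply: eq_bigr => i _; rewrite sum_pred. Qed.

Lemma cross_weight_dotm c c' :
  cross_weight c c' = dotm (outer c c') (fun i k => (k < i)%N : nat).
Proof. by apply: eq_bigr => i _; rewrite sum_pred. Qed.

Lemma inversion_cross_odd f : injective f -> forall i k,
  odd (inversion f i k + inversion f k i + (k < i)%N) = (f k < f i)%N.
Proof.
move=> f_inj i k; rewrite /inversion.
case: (ltngtP i k) => [lt_ik|lt_ik|/val_inj <-]; last by rewrite ltnn.
all: case: (ltngtP (f k) (f i)) => [||/val_inj/f_inj eq_ki] //=.
all: by rewrite eq_ki ltnn in lt_ik.
Qed.

(* Parity identity behind the multiplicativity of a variable permutation: the
   inversions of c + c' plus the crossings of c before c' agree mod 2 with the
   separate inversions plus the crossings of the relabelled exponents. *)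
Lemma inv_weightD f g (fK : cancel f g) c c' :
  odd (inv_weight f (fun i => c i + c' i) + cross_weight c c') =
  odd (inv_weight f c + inv_weight f c' +
       cross_weight (fun i => c (g i)) (fun i => c' (g i))).
Proof.
have expand : inv_weight f (fun i => c i + c' i) =
  (inv_weight f c + inv_weight f c' +
   (dotm (outer c c') (inversion f) + dotm (outer c' c) (inversion f)))%N.
  by rewrite !inv_weight_dotm -!dotmDl; apply: eq_dotm => // i k; rewrite /outer; ring.
have swap : dotm (outer c' c) (inversion f) =
            dotm (outer c c') (fun i k => inversion f k i).
  by rewrite -dotm_tr; apply: eq_dotm => // i k; rewrite /outer mulnC.
have relabel : cross_weight (fun i => c (g i)) (fun i => c' (g i)) =
               dotm (outer c c') (fun i k => (f k < f i)%N : nat).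
  rewrite cross_weight_dotm -(dotm_relabel _ _ (can_inj fK)).
  by apply: eq_dotm => i k; rewrite /outer ?fK.
rewrite expand swap relabel cross_weight_dotm -!addnA !oddD.
congr (_ (+) (_ (+) _)); rewrite -!oddD -!dotmDr; apply: dotm_odd => i k.
by rewrite addnA (inversion_cross_odd (can_inj fK)) oddb.
Qed.

Lemma inversion_comp_odd f h : injective f -> injective h -> forall i k,
  odd (inversion (fun i => f (h i)) i k) =
  odd (inversion h i k +
       (i < k)%N * (inversion f (h i) (h k) + inversion f (h k) (h i))).
Proof.
move=> f_inj h_inj i k; rewrite /inversion.
case: (ltngtP i k) => [lt_ik|_|_] //=; rewrite mul1n.
case: (ltngtP (h k) (h i)) => [||/val_inj/h_inj eq_ki].
all: case: (ltngtP (f (h k)) (f (h i))) => [||/val_inj/f_inj/h_inj eq_ki'] //=.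
all: by rewrite ?eq_ki ?eq_ki' ltnn in lt_ik.
Qed.

(* Parity identity behind the composition of two variable permutations. *)
Lemma inv_weight_comp f h hk (f_inj : injective f) (hK : cancel h hk) c :
  odd (inv_weight (fun i => f (h i)) c) =
  odd (inv_weight h c + inv_weight f (fun i => c (hk i))).
Proof.
have relabel : inv_weight f (fun i => c (hk i)) =
               dotm (outer c c) (fun i k => inversion f (h i) (h k)).
  rewrite inv_weight_dotm -(dotm_relabel _ _ (can_inj hK)).
  by apply: eq_dotm => i k; rewrite /outer ?hK.
rewrite relabel (dotm_upper (a := fun i k => inversion f (h i) (h k))); first last.
- by move=> i; rewrite /inversion ltnn.
- by move=> i k; rewrite /outer mulnC.
rewrite !inv_weight_dotm -dotmDr; apply: dotm_odd => i k.
exact: (@inversion_comp_odd f h f_inj (can_inj hK) i k).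
Qed.
End InversionParity.

Local Open Scope ring_scope.

Section Monomials.
Variable n : nat.

Lemma expo_inj d (m1 m2 : mono n d) : expo m1 =1 expo m2 -> m1 = m2.
Proof. by move=> E; apply/val_inj/ffunP => i; apply: val_inj; exact: E. Qed.

Lemma expo_sum d (m : mono n d) : (\sum_(i < n) expo m i)%N = d.
Proof. by case: m => a /= a_deg; apply/eqP. Qed.

Section MonoOf.
Variables (d : nat) (c : 'I_n -> nat) (c_deg : (\sum_(i < n) c i == d)%N).

Lemma mono_of_bound i : (c i < d.+1)%N.
Proof. by rewrite ltnS -(eqP c_deg) (bigD1 i) //= leq_addr. Qed.

Definition mono_exps : {ffun 'I_n -> 'I_d.+1} := [ffun i => inord (c i)].

Lemma mono_of_deg : (\sum_(i < n) mono_exps i == d)%N.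
Proof.
apply/eqP; rewrite -[RHS](eqP c_deg); apply: eq_bigr => i _.
by rewrite ffunE inordK ?mono_of_bound.
Qed.

Definition mono_of : mono n d := exist _ mono_exps mono_of_deg.

Lemma mono_ofE i : expo mono_of i = c i.
Proof. by rewrite /expo /= ffunE inordK ?mono_of_bound. Qed.
End MonoOf.

Lemma relabel_deg d (f : 'I_n -> 'I_n) (f_inj : injective f) (m : mono n d) :
  (\sum_(i < n) expo m (f i) == d)%N.
Proof.
have := reindex_inj f_inj (op := addn) (x := 0%N) (P := xpredT) (F := expo m).
by move=> /= <-; rewrite expo_sum.
Qed.

Definition relabel d f (f_inj : injective f) (m : mono n d) : mono n d :=
  mono_of (relabel_deg f_inj m).

Lemma relabelE d f f_inj (m : mono n d) i : expo (@relabel d f f_inj m) i = expo m (f i).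
Proof. exact: mono_ofE. Qed.

Lemma relabelK d f g (fK : cancel f g) (gK : cancel g f) :
  cancel (@relabel d g (can_inj gK)) (@relabel d f (can_inj fK)).
Proof. by move=> a; apply: expo_inj => i; rewrite !relabelE fK. Qed.

End Monomials.

Section Coefficients.
Variables (K : fieldType) (n : nat).

Lemma AdegZ d (a : K) (p : Adeg K n d) m : (a *: p) m = a * p m.
Proof. by rewrite ffunE. Qed.

Lemma AdegD d (p q : Adeg K n d) m : (p + q) m = p m + q m.
Proof. by rewrite ffunE. Qed.

Lemma X_coef d c (m : mono n d) : X K d c m = ([forall i, expo m i == c i])%:R.
Proof. by rewrite ffunE. Qed.

Lemma perm_signE (f : 'I_n -> 'I_n) d (a : mono n d) :
  perm_sign K f a = (-1) ^+ inv_weight f (expo a).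
Proof. by []. Qed.

Lemma msignE e e' (a : mono n e) (b : mono n e') :
  msign K a b = (-1) ^+ cross_weight (expo a) (expo b).
Proof. by []. Qed.

Lemma mulA_coef e e' d (p : Adeg K n e) (q : Adeg K n e') (m : mono n d) :
  mulA d p q m = \sum_(a : mono n e) \sum_(b : mono n e')
     p a * q b * msign K a b * ([forall i, expo m i == expo a i + expo b i])%:R.
Proof.
rewrite sum_ffunE; apply: eq_bigr => a _; rewrite sum_ffunE; apply: eq_bigr => b _.
by rewrite AdegZ X_coef.
Qed.

(* The product is linear in its left argument and homogeneous in its right
   one; this is all that is needed to push tau_f through spanning sets. *)
Lemma mulA_linear_l e e' d a (p p' : Adeg K n e) (q : Adeg K n e') :
  mulA d (a *: p + p') q = a *: mulA d p q + mulA d p' q.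
Proof.
apply/ffunP => m; rewrite AdegD AdegZ !mulA_coef mulr_sumr -big_split.
apply: eq_bigr => x _ /=; rewrite mulr_sumr -big_split; apply: eq_bigr => y _ /=.
by rewrite AdegD AdegZ; ring.
Qed.

Lemma mulA0l e e' d (q : Adeg K n e') : mulA d (0 : Adeg K n e) q = 0.
Proof.
apply/ffunP => m; rewrite mulA_coef ffunE big1 // => x _; rewrite big1 // => y _.
by rewrite ffunE !mul0r.
Qed.

Lemma mulA_suml e e' d I (r : seq I) (F : I -> Adeg K n e) (q : Adeg K n e') :
  mulA d (\sum_(i <- r) F i) q = \sum_(i <- r) mulA d (F i) q.
Proof.
elim: r => [|x r IH]; first by rewrite !big_nil mulA0l.
by rewrite !big_cons -IH -[mulA d (F x) q]scale1r -mulA_linear_l scale1r.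
Qed.

Lemma mulAZr e e' d a (p : Adeg K n e) (q : Adeg K n e') :
  mulA d p (a *: q) = a *: mulA d p q.
Proof.
apply/ffunP => m; rewrite AdegZ !mulA_coef mulr_sumr; apply: eq_bigr => x _ /=.
by rewrite mulr_sumr; apply: eq_bigr => y _ /=; rewrite AdegZ; ring.
Qed.

End Coefficients.

(* The graded automorphism tau_f = permA_fun f g of A permuting the variables,
   x_i |-> x_{f i}, for a permutation f of the indices with inverse g. *)
Section VariablePermutation.
Variables (K : fieldType) (n : nat) (f g : 'I_n -> 'I_n).
Hypotheses (fK : cancel f g) (gK : cancel g f).

Lemma permA_coef d (p : Adeg K n d) m :
  permA_fun f g p m =
  p (relabel (can_inj fK) m) * perm_sign K f (relabel (can_inj fK) m).
Proof.
rewrite sum_ffunE (bigD1 (relabel (can_inj fK) m)) //= AdegZ X_coef.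
have -> : [forall i, expo m i == expo (relabel (can_inj fK) m) (g i)].
  by apply/forallP => i; rewrite relabelE gK.
rewrite mulr1 big1 ?addr0 // => a a_neq; rewrite AdegZ X_coef.
case: forallP => [a_m|]; last by rewrite mulr0.
case/eqP: a_neq; apply: expo_inj => i; by rewrite relabelE (eqP (a_m (f i))) fK.
Qed.

Lemma permA_linear d : linear (@permA_fun K n f g d).
Proof.
move=> a p q; rewrite /permA_fun scaler_sumr -big_split; apply: eq_bigr => x _ /=.
by rewrite AdegD AdegZ scalerA -scalerDl mulrDl mulrA.
Qed.

Lemma permA_X e (b : mono n e) :
  permA_fun f g (X K e (expo b)) =
  perm_sign K f b *: X K e (expo (relabel (can_inj gK) b)).
Proof.
apply/ffunP => m; rewrite permA_coef AdegZ !X_coef.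
have -> : [forall i, expo m i == expo (relabel (can_inj gK) b) i] =
          [forall i, expo (relabel (can_inj fK) m) i == expo b i].
  apply/forallP/forallP => m_b i; rewrite !relabelE.
    by rewrite (eqP (m_b (f i))) relabelE fK.
  by have := m_b (g i); rewrite relabelE gK.
case: forallP => [m_b|]; last by rewrite mul0r mulr0.
by rewrite (expo_inj (fun i => eqP (m_b i))) mul1r mulr1.
Qed.

(* tau_f is multiplicative; the signs match by the parity identity
   inv_weightD. *)
Lemma permA_mul e e' d (p : Adeg K n e) (q : Adeg K n e') :
  permA_fun f g (mulA d p q) = mulA d (permA_fun f g p) (permA_fun f g q).
Proof.
have relabel_gK k := @relabelK n k f g fK gK.
apply/ffunP => m; rewrite permA_coef !mulA_coef big_distrl /=.
rewrite [RHS](reindex_inj (can_inj (relabel_gK _))) /=.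
apply: eq_bigr => a _; rewrite big_distrl /=.
rewrite [RHS](reindex_inj (can_inj (relabel_gK _))) /=.
apply: eq_bigr => b _; rewrite !permA_coef !relabelK.
have -> : [forall i, expo m i ==
             expo (relabel (can_inj gK) a) i + expo (relabel (can_inj gK) b) i]
        = [forall i, expo (relabel (can_inj fK) m) i == expo a i + expo b i].
  apply/forallP/forallP => m_ab i; rewrite !relabelE.
    by rewrite (eqP (m_ab (f i))) !relabelE !fK.
  by have := m_ab (g i); rewrite !relabelE gK.
case: forallP => m_ab; last by rewrite !mulr0 mul0r.
have sign : perm_sign K f (relabel (can_inj fK) m) * msign K a b =
  perm_sign K f a * perm_sign K f b *
  msign K (relabel (can_inj gK) a) (relabel (can_inj gK) b).
  rewrite !msignE !perm_signE -!exprD -signr_odd.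
  have m_sum : expo (relabel (can_inj fK) m) =1 (fun i => expo a i + expo b i)%N.
    by move=> i; apply/eqP.
  rewrite (eq_inv_weight f m_sum) (inv_weightD fK) signr_odd.
  by congr ((-1) ^+ (_ + _)); apply: eq_cross_weight => i; rewrite relabelE.
rewrite !mulr1.
transitivity (p a * q b * (perm_sign K f (relabel (can_inj fK) m) * msign K a b)).
  by ring.
by rewrite sign; ring.
Qed.

End VariablePermutation.

HB.instance Definition _ (K : fieldType) n (f g : 'I_n -> 'I_n) d :=
  GRing.isLinear.Build K (Adeg K n d) (Adeg K n d) *:%R (@permA_fun K n f g d)
    (@permA_linear K n f g d).

Section PermutationAction.
Variables (K : fieldType) (n : nat).
Implicit Types f g h k : 'I_n -> 'I_n.

Lemma eq_permA f g f' g' (fK : cancel f g) (gK : cancel g f)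
    (f'K : cancel f' g') (g'K : cancel g' f') (E : f =1 f') d (p : Adeg K n d) :
  permA_fun f g p = permA_fun f' g' p.
Proof.
apply/ffunP => m; rewrite (permA_coef fK gK) (permA_coef f'K g'K).
have -> : relabel (can_inj fK) m = relabel (can_inj f'K) m.
  by apply: expo_inj => i; rewrite !relabelE E.
by rewrite !perm_signE (eq_inv_weight_perm _ E).
Qed.

Lemma permA_id d (p : Adeg K n d) : permA_fun id id p = p.
Proof.
have idK : cancel (@id 'I_n) id by [].
apply/ffunP => m; rewrite (permA_coef idK idK).
have -> : relabel (can_inj idK) m = m by apply: expo_inj => i; rewrite relabelE.
rewrite perm_signE /inv_weight big1 ?mulr1 // => i _; rewrite big1 // => k /andP [].
by move=> /ltn_trans lt_ik /lt_ik; rewrite ltnn.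
Qed.

(* tau_f tau_h = tau_{f o h}; the signs match by inv_weight_comp. *)
Lemma permA_comp f g h k (fK : cancel f g) (gK : cancel g f)
    (hK : cancel h k) (kK : cancel k h) d (p : Adeg K n d) :
  permA_fun f g (permA_fun h k p) = permA_fun (fun i => f (h i)) (fun i => k (g i)) p.
Proof.
have fhK : cancel (fun i => f (h i)) (fun i => k (g i)) by move=> i; rewrite fK hK.
have khK : cancel (fun i => k (g i)) (fun i => f (h i)) by move=> i; rewrite kK gK.
apply/ffunP => m; rewrite (permA_coef fK gK) (permA_coef hK kK) (permA_coef fhK khK).
have -> : relabel (can_inj hK) (relabel (can_inj fK) m) = relabel (can_inj fhK) m.
  by apply: expo_inj => i; rewrite !relabelE.
rewrite -mulrA; congr (_ * _).
rewrite !perm_signE -exprD -signr_odd (inv_weight_comp (can_inj fK) hK) signr_odd.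
by congr ((-1) ^+ (_ + _)); apply: eq_inv_weight => i; rewrite !relabelE kK.
Qed.

Lemma permAK f g (fK : cancel f g) (gK : cancel g f) d :
  cancel (@permA_fun K n f g d) (@permA_fun K n g f d).
Proof.
move=> p; rewrite (permA_comp gK fK fK gK).
have ggK : cancel (fun i => g (f i)) (fun i => g (f i)) by move=> i; rewrite !fK.
have idK : cancel (@id 'I_n) id by [].
by rewrite (eq_permA ggK ggK idK idK fK) permA_id.
Qed.

End PermutationAction.

Section RightIdeal.
Variables (K : fieldType) (n : nat) (w : K).

Definition RA_block j e d : seq (Adeg K n d) :=
  [seq mulA d r (X K (d - e) (expo b))
     | r <- (vbasis (Rdeg n w j e) : seq _), b <- enum [set: mono n (d - e)]].

Lemma RAdegE j d : RAdeg n w j d = (\sum_(e < d.+1) <<RA_block j e d>>)%VS.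
Proof. by []. Qed.

Lemma mulA_mem_block j e d (r : Adeg K n e) (b : mono n (d - e)) :
  r \in Rdeg n w j e -> mulA d r (X K (d - e) (expo b)) \in <<RA_block j e d>>%VS.
Proof.
move=> r_R; rewrite (coord_vbasis r_R) mulA_suml; apply: memv_suml => i _.
rewrite -[_ *: _]addr0 mulA_linear_l mulA0l addr0; apply: memvZ.
apply: memv_span; apply/allpairsP; exists ((vbasis (Rdeg n w j e))`_i, b).
by rewrite mem_nth ?size_tuple // mem_enum inE.
Qed.

Lemma permA_RAdeg j j' (f g : 'I_n -> 'I_n) (fK : cancel f g) (gK : cancel g f) :
  (forall e v, v \in Rdeg n w j e -> permA_fun f g v \in Rdeg n w j' e) ->
  forall d, (linfun (@permA_fun K n f g d) @: RAdeg n w j d <= RAdeg n w j' d)%VS.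
Proof.
move=> tau_R d; rewrite !RAdegE limg_sum; apply/subv_sumP => e _.
apply: (sumv_sup e) => //; rewrite limg_span.
apply/span_subvP => x /mapP [y /allpairsP [[r b] [r_basis _ ->]] ->] /=.
rewrite lfunE /= (permA_mul fK gK) (permA_X K fK gK) mulAZr; apply: memvZ.
by apply/mulA_mem_block/tau_R; exact: vbasis_mem r_basis.
Qed.

(* Hence, tau_f being injective, dim (R_j A)_d <= dim (R_j' A)_d. *)
Lemma dim_RAdeg_le j j' (f g : 'I_n -> 'I_n) (fK : cancel f g) (gK : cancel g f) :
  (forall e v, v \in Rdeg n w j e -> permA_fun f g v \in Rdeg n w j' e) ->
  forall d, (\dim (RAdeg n w j d) <= \dim (RAdeg n w j' d))%N.
Proof.
move=> tau_R d; set tau := linfun (@permA_fun K n f g d).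
have tau_inj : lker tau = 0%VS.
  by apply/eqP/lker0P => x y; rewrite !lfunE /= => /(can_inj (@permAK K n f g fK gK d)).
have := dimvS (permA_RAdeg fK gK tau_R d).
by rewrite (limg_dim_eq (f := tau)) // tau_inj capv0.
Qed.

End RightIdeal.

Section IndexMaps.
Variables (n : nat) (n_gt0 : (0 < n)%N).

Definition shift k (i : 'I_n) : 'I_n := iter k (@succ_mod n) i.
Definition unshift k (i : 'I_n) : 'I_n := iter k (@pred_mod n) i.
Definition mul_mod (u : nat) (i : 'I_n) : 'I_n := Ordinal (ltn_pmod (u * i) n_gt0).

Lemma shiftK k : cancel (shift k) (unshift k).
Proof.
elim: k => [|k IH] i //; rewrite /shift /unshift iterSr iterS.
by rewrite /succ_mod /pred_mod ordSK; exact: IH.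
Qed.

Lemma unshiftK k : cancel (unshift k) (shift k).
Proof.
elim: k => [|k IH] i //; rewrite /shift /unshift iterSr iterS.
by rewrite /succ_mod /pred_mod ord_predK; exact: IH.
Qed.

Lemma shiftE k i : (shift k i : nat) = ((i + k) %% n)%N.
Proof.
elim: k => [|k IH] /=; first by rewrite addn0 modn_small.
by rewrite -addn1 IH modnDml -addnA addn1.
Qed.

Lemma mul_modK u u' : ((u * u') %% n = 1)%N -> cancel (mul_mod u) (mul_mod u').
Proof.
move=> uu' i; apply: val_inj => /=.
by rewrite modnMmr mulnA -modnMml (mulnC u') uu' mul1n modn_small.
Qed.

Lemma succ_mul_mod u u' : ((u * u') %% n = 1)%N ->
  forall i, succ_mod (mul_mod u i) = mul_mod u (shift u' i).
Proof.
move=> uu' i; apply: val_inj => /=.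
by rewrite shiftE modnMmr mulnDr -modnDmr uu' -addn1 modnDml.
Qed.

End IndexMaps.

Section Eigenvectors.
Variables (K : fieldType) (n : nat) (n_gt0 : (0 < n)%N) (w : K).

Lemma mem_Rdeg j e (v : Adeg K n e) :
  (v \in Rdeg n w j e) = (permA_fun (@succ_mod n) (@pred_mod n) v == w ^- j *: v).
Proof.
by rewrite memv_ker add_lfunE opp_lfunE scale_lfunE id_lfunE lfunE subr_eq0.
Qed.

Lemma permA_shift_eigen c k e (v : Adeg K n e) :
  permA_fun (@succ_mod n) (@pred_mod n) v = c *: v ->
  permA_fun (shift k) (unshift k) v = c ^+ k *: v.
Proof.
move=> sigma_v; elim: k => [|k IH].
  have idK : cancel (@id 'I_n) id by [].
  by rewrite (eq_permA (shiftK 0) (unshiftK 0) idK idK (frefl _)) permA_id scale1r.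
rewrite (eq_permA (shiftK k.+1) (unshiftK k.+1) (can_comp (@ordSK n) (shiftK k))
           (can_comp (unshiftK k) (@ord_predK n)) (frefl _)).
rewrite -(permA_comp (@ordSK n) (@ord_predK n) (shiftK k) (unshiftK k)) IH.
by rewrite linearZ /= sigma_v scalerA exprSr.
Qed.

(* Since sigma tau_u = tau_u sigma^{u'}, the automorphism tau_u maps the
   omega^{-j}-eigenspace of sigma to the omega^{-j u'}-eigenspace. *)
Lemma permA_mul_mod_Rdeg u u' :
  ((u * u') %% n = 1)%N -> ((u' * u) %% n = 1)%N ->
  forall j e (v : Adeg K n e), v \in Rdeg n w j e ->
  permA_fun (mul_mod n_gt0 u) (mul_mod n_gt0 u') v \in Rdeg n w (j * u') e.
Proof.
move=> uu' u'u j e v; rewrite !mem_Rdeg => /eqP sigma_v.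
have uK := mul_modK n_gt0 uu'; have u'K := mul_modK n_gt0 u'u.
rewrite (permA_comp (@ordSK n) (@ord_predK n) uK u'K).
rewrite (eq_permA (can_comp (@ordSK n) uK) (can_comp u'K (@ord_predK n))
           (can_comp uK (shiftK u')) (can_comp (unshiftK u') u'K)
           (succ_mul_mod n_gt0 uu')).
rewrite -(permA_comp uK u'K (shiftK u') (unshiftK u')) (permA_shift_eigen u' sigma_v).
by rewrite linearZ /= exprVn exprM.
Qed.

Lemma dim_RAdeg_mul_le u u' :
  ((u * u') %% n = 1)%N -> ((u' * u) %% n = 1)%N ->
  forall j d, (\dim (RAdeg n w j d) <= \dim (RAdeg n w (j * u') d))%N.
Proof.
move=> uu' u'u j; apply: (dim_RAdeg_le (mul_modK n_gt0 uu') (mul_modK n_gt0 u'u)).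
exact: permA_mul_mod_Rdeg.
Qed.

End Eigenvectors.

Lemma RAdeg_root (K : fieldType) n (w : K) j1 j2 d :
  w ^+ j1 = w ^+ j2 -> RAdeg n w j1 d = RAdeg n w j2 d.
Proof. by move=> E; apply: eq_bigr => e _; rewrite /Rdeg E. Qed.

Lemma dim_RAdeg_coprime (K : fieldType) n (n_gt1 : (1 < n)%N) (w : K)
    (w_prim : n.-primitive_root w)
    lam (lam_gt0 : (0 < lam)%N) (lam_coprime : coprime lam n) j d :
  \dim (RAdeg n w ((lam * j) %% n) d) = \dim (RAdeg n w j d).
Proof.
have n_gt0 : (0 < n)%N := ltnW n_gt1.
have [mu k mu_lam _] := egcdnP n lam_gt0.
have mu_lam1 : ((mu * lam) %% n = 1)%N.
  by rewrite mu_lam (eqP lam_coprime) modnMDl modn_small.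
have lam_mu1 : ((lam * mu) %% n = 1)%N by rewrite mulnC.
have root_lam : w ^+ ((lam * j) %% n) = w ^+ (j * lam).
  by rewrite (prim_expr_mod w_prim) mulnC.
have root_back : w ^+ (j * lam * mu) = w ^+ j.
  by apply/eqP; rewrite (eq_prim_root_expr w_prim) -mulnA -modnMmr lam_mu1 muln1.
rewrite (RAdeg_root n d root_lam); apply/anti_leq/andP; split.
  rewrite -[X in (_ <= \dim X)%N](RAdeg_root n d root_back).
  by apply: (dim_RAdeg_mul_le n_gt0 w lam_mu1 mu_lam1).
by apply: (dim_RAdeg_mul_le n_gt0 w mu_lam1 lam_mu1).
Qed.

Lemma qdim_coprime (K : fieldType) n (n_gt1 : (1 < n)%N) (w : K)
    (w_prim : n.-primitive_root w)
    lam (lam_gt0 : (0 < lam)%N) (lam_coprime : coprime lam n) j d :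
  qdim n w j d = qdim n w ((lam * j) %% n) d.
Proof.
have := esym (dim_RAdeg_coprime n_gt1 w_prim lam_gt0 lam_coprime j d).
by rewrite /qdim; exact: congr1.
Qed.

Theorem lemma3p4 (K : closedFieldType) (charK0 : [pchar K] =i pred0)
  (n : nat) (n_ge2 : (2 <= n)%N) (w : K) (w_prim : n.-primitive_root w)
  (lam : nat) (lam_gt0 : (0 < lam)%N) (lam_coprime : coprime lam n)
  (j : nat) (j_ge1 : (1 <= j)%N) (j_le : (j <= n - 1)%N) :
  (forall d : nat, qdim n w j d = qdim n w ((lam * j) %% n) d)
  /\ (prime n -> forall j' : nat, (2 <= j' <= n - 1)%N ->
        forall d : nat, qdim n w 1 d = qdim n w j' d).
Proof.
have n_gt1 : (1 < n)%N := n_ge2.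
split=> [d|n_prime j' /andP [j'_ge2 j'_le] d].
  exact: (qdim_coprime n_gt1 w_prim lam_gt0 lam_coprime).
have j'_gt0 : (0 < j')%N by apply: leq_trans j'_ge2.
have j'_lt_n : (j' < n)%N by lia.
have j'_coprime : coprime j' n by rewrite coprime_sym prime_coprime ?gtnNdvd.
by rewrite (qdim_coprime n_gt1 w_prim j'_gt0 j'_coprime 1) muln1 modn_small.
Qed.
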